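(* An element $r\in\mathrm{Im}(1\otimes1-\tau)\subset\mathfrak{L}\otimes\mathfrak{L}$ satisfies the classical Yang–Baxter equation $c(r)=0$ if and only if it satisfies the modified Yang–Baxter equation $x\circ c(r)=0$ for all $x\in\mathfrak{L}$.
   Context: Let $\Gamma$ be a nontrivial additive subgroup of $\mathbb{R}$, and let $s\in\mathbb{R}$ with $2s\in\Gamma$. The Lie superalgebra $\mathfrak{L}$ over $\mathbb{C}$ has basis $\{L_p,I_p,G_r,H_r\mid p\in\Gamma,\ r\in s+\Gamma\}$. Here $L_p,I_p$ are even and $G_r,H_r$ are odd. The nonzero super-brackets are $[L_p,L_q]=(p-q)L_{p+q}$, $[L_p,I_q]=(p-q)I_{p+q}$, $[L_p,G_r]=(\tfrac p2-r)G_{p+r}$, $[L_p,H_r]=(\tfrac p2-r)H_{p+r}$, $[G_r,G_t]=I_{r+t}$, $[I_p,G_r]=(p-2r)H_{p+r}$. All other brackets of basis elements vanish, apart from those forced by super-antisymmetry. Conventions: - $[x]$ is the parity of $x$, and $\tau(x\otimes y)=(-1)^{[x][y]}y\otimes x$. - $\mathfrak{L}$ acts on tensor powers of itself by the diagonal adjoint action, e.g. $x\circ(a\otimes b)=[x,a]\otimes b+(-1)^{[x][a]}a\otimes[x,b]$, and similarly on triple tensors with the Koszul sign rule. For $r=\sum_i a_i\otimes b_i$ with homogeneous $a_i,b_i$, define $c(r)=\sum_{i,j}\Big((-1)^{[a_j][b_i]}[a_i,a_j]\otimes b_i\otimes b_j+a_i\otimes[b_i,a_j]\otimes b_j+(-1)^{[a_j][b_i]}a_i\otimes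 a_j\otimes[b_i,b_j]\Big)\in\mathfrak{L}^{\otimes3}$. *)

(* structure constants are real numbers, coefficients are complex
   numbers, modelled as pairs of Stdlib reals. *)
From Stdlib Require Import Reals List.
Import ListNotations.
Open Scope R_scope.

Record Cx := mkCx { Cre : R; Cim : R }.
Definition C0 : Cx := mkCx 0 0.
Definition RtoC (x : R) : Cx := mkCx x 0.
Definition Cadd (z w : Cx) : Cx := mkCx (Cre z + Cre w) (Cim z + Cim w).
Definition Cmul (z w : Cx) : Cx :=
  mkCx (Cre z * Cre w - Cim z * Cim w) (Cre z * Cim w + Cim z * Cre w).
Definition Copp (z : Cx) : Cx := mkCx (- Cre z) (- Cim z).

Definition is_add_subgroup (Gam : R -> Prop) : Prop :=
  Gam 0 /\ (forall x y, Gam x -> Gam y -> Gam (x + y)) /\ (forall x, Gam x -> Gam (- x)).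
Definition nontrivial_subgroup (Gam : R -> Prop) : Prop :=
  is_add_subgroup Gam /\ exists g, Gam g /\ g <> 0.

Inductive bas := bL (p : R) | bI (p : R) | bG (r : R) | bH (r : R).

(* parity: true = odd *)
Definition par (b : bas) : bool :=
  match b with bL _ | bI _ => false | bG _ | bH _ => true end.

Definition valid (Gam : R -> Prop) (s : R) (b : bas) : Prop :=
  match b with
  | bL p | bI p => Gam p
  | bG r | bH r => Gam (r - s)
  end.

Definition bas_eq_dec : forall x y : bas, {x = y} + {x <> y}.
Proof. decide equality; apply Req_EM_T. Defined.

Definition tri_eq_dec : forall x y : bas * bas * bas, {x = y} + {x <> y}.
Proof. decide equality; try apply bas_eq_dec; decide equality; apply bas_eq_dec. Defined.

Definition sgn (b : bool) : R := if b then -1 else 1.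

(** Super-bracket of basis elements, as a real linear combination of basis
    elements (all brackets, including those forced by super-antisymmetry). *)
Definition brb (x y : bas) : list (R * bas) :=
  match x, y with
  | bL p, bL q => [(p - q, bL (p + q))]
  | bL p, bI q => [(p - q, bI (p + q))]
  | bI q, bL p => [(- (p - q), bI (p + q))]
  | bL p, bG r => [(p / 2 - r, bG (p + r))]
  | bG r, bL p => [(- (p / 2 - r), bG (p + r))]
  | bL p, bH r => [(p / 2 - r, bH (p + r))]
  | bH r, bL p => [(- (p / 2 - r), bH (p + r))]
  | bG r, bG t => [(1, bI (r + t))]
  | bI p, bG r => [(p - 2 * r, bH (p + r))]
  | bG r, bI p => [(- (p - 2 * r), bH (p + r))]
  | _, _ => []
  end.

(** Elements of L, L(x)L, L(x)L(x)L as finite formal C-linear combinations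
    of (tensors of) basis elements. *)
Definition vec1 := list (Cx * bas).
Definition vec2 := list (Cx * (bas * bas)).
Definition vec3 := list (Cx * (bas * bas * bas)).

Definition valid1 Gam s (x : vec1) : Prop :=
  Forall (fun '(_, b) => valid Gam s b) x.
Definition valid2 Gam s (v : vec2) : Prop :=
  Forall (fun '(_, (a, b)) => valid Gam s a /\ valid Gam s b) v.

Definition coef3 (v : vec3) (t : bas * bas * bas) : Cx :=
  fold_right (fun '(c, u) acc => if tri_eq_dec u t then Cadd c acc else acc) C0 v.

Definition is_zero3 (v : vec3) : Prop := forall t, coef3 v t = C0.

Definition tau2 (v : vec2) : vec2 :=
  map (fun '(c, (a, b)) => (Cmul c (RtoC (sgn (par a && par b))), (b, a))) v.
Definition one_minus_tau (v : vec2) : vec2 :=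
  v ++ map (fun '(c, u) => (Copp c, u)) (tau2 v).

Definition act3b (x : bas) (t : bas * bas * bas) : list (R * (bas * bas * bas)) :=
  let '(a, b, c) := t in
  map (fun '(k, d) => (k, (d, b, c))) (brb x a) ++
  map (fun '(k, d) => (sgn (par x && par a) * k, (a, d, c))) (brb x b) ++
  map (fun '(k, d) => (sgn (par x && xorb (par a) (par b)) * k, (a, b, d))) (brb x c).

Definition act3 (x : vec1) (v : vec3) : vec3 :=
  flat_map (fun '(al, xb) =>
    flat_map (fun '(be, t) =>
      map (fun '(k, u) => (Cmul (Cmul al be) (RtoC k), u)) (act3b xb t)) v) x.

Definition cterms (ai bi aj bj : bas) : list (R * (bas * bas * bas)) :=
  map (fun '(k, d) => (sgn (par aj && par bi) * k, (d, bi, bj))) (brb ai aj) ++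
  map (fun '(k, d) => (k, (ai, d, bj))) (brb bi aj) ++
  map (fun '(k, d) => (sgn (par aj && par bi) * k, (ai, aj, d))) (brb bi bj).

Definition cYB (r : vec2) : vec3 :=
  flat_map (fun '(ali, (ai, bi)) =>
    flat_map (fun '(alj, (aj, bj)) =>
      map (fun '(k, u) => (Cmul (Cmul ali alj) (RtoC k), u)) (cterms ai bi aj bj)) r) r.

(* The forward direction is linearity of the action.  Conversely, no nonzero
   v in L^{(x)3} is annihilated by all of L: grade basis tensors by the index
   of their first factor, take a tensor a (x) b (x) c of maximal grade in the
   support of v and pick p in Gamma with p > 0, p <> idx a, p <> 2 idx a.
   Then L_p raises the grade of every factor it hits, so the only contribution
   to the coefficient of [L_p, a] (x) b (x) c in L_p o v comes from
   a (x) b (x) c itself, and it is a nonzero multiple of the coefficient of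
   a (x) b (x) c in v. *)
From Stdlib Require Import Reals List Lra.
Import ListNotations.
Open Scope R_scope.

Definition C1 : Cx := mkCx 1 0.
Definition Csub (z w : Cx) : Cx := Cadd z (Copp w).

Lemma Cx_ring : ring_theory C0 C1 Cadd Cmul Csub Copp (@eq Cx).
Proof.
  split; intros; repeat match goal with z : Cx |- _ => destruct z end;
    unfold Csub, Cadd, Cmul, Copp, C0, C1; simpl; f_equal; ring.
Qed.
Add Ring Cx_ring : Cx_ring.

Lemma Cx_eq_dec (z w : Cx) : {z = w} + {z <> w}.
Proof. decide equality; apply Req_EM_T. Defined.

Lemma Cmul_RtoC_eq0 (z : Cx) (k : R) : k <> 0 -> Cmul z (RtoC k) = C0 -> z = C0.
Proof.
  destruct z as [x y]; unfold Cmul, RtoC, C0; simpl; intros Hk E.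
  injection E as Ex Ey.
  assert (Hx : x * k = 0) by lra; assert (Hy : y * k = 0) by lra.
  destruct (Rmult_integral _ _ Hx), (Rmult_integral _ _ Hy); now subst.
Qed.

Section FiniteSums.

Variable f g : bas * bas * bas -> Cx.

Definition sum3 (D : list (bas * bas * bas)) (h : bas * bas * bas -> Cx) : Cx :=
  fold_right (fun d acc => Cadd (h d) acc) C0 D.

Lemma sum3_ext D : (forall d, In d D -> f d = g d) -> sum3 D f = sum3 D g.
Proof.
  induction D as [|a D IH]; intros H; simpl; auto.
  rewrite H, IH; auto with datatypes.
Qed.

Lemma sum3D D : sum3 D (fun d => Cadd (f d) (g d)) = Cadd (sum3 D f) (sum3 D g).
Proof. induction D as [|a D IH]; simpl; [ring | rewrite IH; ring]. Qed.

Lemma sum3_eq0 D : (forall d, In d D -> f d = C0) -> sum3 D f = C0.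
Proof.
  induction D as [|a D IH]; intros H; simpl; auto.
  rewrite H, IH; auto with datatypes; ring.
Qed.

Lemma sum3_single D u : NoDup D -> In u D ->
  (forall d, In d D -> d <> u -> f d = C0) -> sum3 D f = f u.
Proof.
  induction D as [|a D IH]; intros ND Hu H; [destruct Hu|].
  inversion ND as [|? ? HaD ND']; subst; simpl.
  destruct Hu as [<-|Hu].
  - rewrite sum3_eq0; [ring|]. intros d Hd; apply H; [now right|].
    intros ->; contradiction.
  - rewrite H, IH; auto with datatypes; [ring|]. intros ->; contradiction.
Qed.

End FiniteSums.

Lemma coef3_cons c u v T :
  coef3 ((c, u) :: v) T = if tri_eq_dec u T then Cadd c (coef3 v T) else coef3 v T.
Proof. reflexivity. Qed.

Lemma coef3_app v w T : coef3 (v ++ w) T = Cadd (coef3 v T) (coef3 w T).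
Proof.
  induction v as [|[c u] v IH]; simpl app.
  - simpl; ring.
  - rewrite !coef3_cons; destruct tri_eq_dec; rewrite IH; ring.
Qed.

Lemma coef3_notin v T : ~ In T (map snd v) -> coef3 v T = C0.
Proof.
  induction v as [|[c u] v IH]; intros H; [reflexivity|].
  rewrite coef3_cons; simpl in H; destruct tri_eq_dec; [tauto|].
  apply IH; tauto.
Qed.

Definition cplx3 (l : list (R * (bas * bas * bas))) : vec3 :=
  map (fun '(k, u) => (RtoC k, u)) l.

Lemma coef3_scale c l T :
  coef3 (map (fun '(k, u) => (Cmul c (RtoC k), u)) l) T = Cmul c (coef3 (cplx3 l) T).
Proof.
  unfold cplx3; induction l as [|[k u] l IH]; simpl map.
  - simpl; ring.
  - rewrite !coef3_cons; destruct tri_eq_dec; rewrite IH; ring.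
Qed.

Definition expand3 (al : Cx) (F : bas * bas * bas -> list (R * (bas * bas * bas)))
    (v : vec3) : vec3 :=
  flat_map (fun '(be, t) =>
    map (fun '(k, u) => (Cmul (Cmul al be) (RtoC k), u)) (F t)) v.

Lemma act3_cons al x y v : act3 ((al, x) :: y) v = expand3 al (act3b x) v ++ act3 y v.
Proof. reflexivity. Qed.

Lemma coef3_expand3 al F v D T : NoDup D -> (forall u, In u (map snd v) -> In u D) ->
  coef3 (expand3 al F v) T = sum3 D (fun d => Cmul (Cmul al (coef3 v d)) (coef3 (cplx3 (F d)) T)).
Proof.
  intros ND; induction v as [|[be t] v IH]; intros Hv.
  - symmetry; apply sum3_eq0; intros; simpl; ring.
  - change (expand3 al F ((be, t) :: v)) with
      (map (fun '(k, u) => (Cmul (Cmul al be) (RtoC k), u)) (F t) ++ expand3 al F v).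
    rewrite coef3_app, coef3_scale, IH by (intros; apply Hv; simpl; auto).
    transitivity (sum3 D (fun d => Cadd
      (if tri_eq_dec t d then Cmul (Cmul al be) (coef3 (cplx3 (F d)) T) else C0)
      (Cmul (Cmul al (coef3 v d)) (coef3 (cplx3 (F d)) T)))).
    + rewrite sum3D; f_equal; symmetry.
      rewrite (sum3_single _ D t ND);
        [| apply Hv; simpl; auto | intros d _ Hd; destruct (tri_eq_dec t d); congruence].
      destruct (tri_eq_dec t t); congruence.
    + apply sum3_ext; intros d _.
      rewrite coef3_cons; destruct tri_eq_dec; ring.
Qed.

Definition keys3 (v : vec3) : list (bas * bas * bas) := nodup tri_eq_dec (map snd v).

Lemma coef3_act3 al x v D T : NoDup D -> (forall u, In u (map snd v) -> In u D) ->
  coef3 (act3 [(al, x)] v) T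
  = sum3 D (fun d => Cmul (Cmul al (coef3 v d)) (coef3 (cplx3 (act3b x d)) T)).
Proof.
  intros ND HD; rewrite act3_cons, app_nil_r; exact (coef3_expand3 _ _ _ _ _ ND HD).
Qed.

Lemma act3_zero3 x v : is_zero3 v -> is_zero3 (act3 x v).
Proof.
  intros Hz T; induction x as [|[al xb] x IH]; [reflexivity|].
  rewrite act3_cons, coef3_app, IH,
    (coef3_expand3 _ _ _ (keys3 v)) by (apply NoDup_nodup || (intros; apply nodup_In; auto)).
  rewrite sum3_eq0; [ring|]; intros d _; rewrite Hz; ring.
Qed.

Definition idx (b : bas) : R := match b with bL q | bI q | bG q | bH q => q end.

Definition shift (p : R) (b : bas) : bas :=
  match b with
  | bL q => bL (p + q) | bI q => bI (p + q) | bG q => bG (p + q) | bH q => bH (p + q)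
  end.

Definition weight (p : R) (b : bas) : R :=
  match b with bL q | bI q => p - q | bG q | bH q => p / 2 - q end.

Lemma brb_L p b : brb (bL p) b = [(weight p b, shift p b)].
Proof. now destruct b. Qed.

Lemma idx_shift p b : idx (shift p b) = p + idx b.
Proof. now destruct b. Qed.

Lemma shift_inj p b b' : shift p b = shift p b' -> b = b'.
Proof. destruct b, b'; simpl; intro E; inversion E; f_equal; lra. Qed.

Lemma weight_neq0 p b : p <> idx b -> p <> 2 * idx b -> weight p b <> 0.
Proof. destruct b; simpl; lra. Qed.

Definition idx3 (t : bas * bas * bas) : R := let '(a, _, _) := t in idx a.

Lemma coef3_act3b_L p d a b c : 0 < p -> idx3 d <= idx a ->
  coef3 (cplx3 (act3b (bL p) d)) (shift p a, b, c)
  = if tri_eq_dec d (a, b, c) then RtoC (weight p a) else C0.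
Proof.
  destruct d as [[a' b'] c']; simpl idx3; intros Hp Hle.
  unfold act3b, cplx3; rewrite !brb_L; cbn [map app]; rewrite !coef3_cons.
  (* only the first factor can be raised to grade [p + idx a] *)
  assert (Hfirst : forall b1 c1, (a', b1, c1) <> (shift p a, b, c)).
  { intros b1 c1 E; apply (f_equal idx3) in E; simpl in E; rewrite idx_shift in E; lra. }
  destruct (tri_eq_dec (a', shift p b', c') _) as [E|_]; [now apply Hfirst in E|].
  destruct (tri_eq_dec (a', b', shift p c') _) as [E|_]; [now apply Hfirst in E|].
  destruct (tri_eq_dec (a', b', c') (a, b, c)) as [E|NE].
  - injection E as -> -> ->; destruct tri_eq_dec; [simpl; f_equal; ring | congruence].
  - destruct tri_eq_dec as [E|]; [|reflexivity].
    injection E as E -> ->; apply shift_inj in E; congruence.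
Qed.

Lemma coef3_act3_L_top p v a b c : 0 < p -> In (a, b, c) (keys3 v) ->
  (forall d, In d (keys3 v) -> coef3 v d <> C0 -> idx3 d <= idx a) ->
  coef3 (act3 [(C1, bL p)] v) (shift p a, b, c) = Cmul (coef3 v (a, b, c)) (RtoC (weight p a)).
Proof.
  intros Hp Habc Htop.
  rewrite (coef3_act3 _ _ _ (keys3 v)) by (apply NoDup_nodup || (intros; apply nodup_In; auto)).
  rewrite (sum3_single _ _ (a, b, c)); [| apply NoDup_nodup | exact Habc |].
  - rewrite coef3_act3b_L by (simpl; lra). destruct tri_eq_dec; [ring | congruence].
  - intros d Hd Hne; destruct (Cx_eq_dec (coef3 v d) C0) as [->|Hnz]; [ring|].
    rewrite coef3_act3b_L by auto. destruct tri_eq_dec; [congruence | ring].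
Qed.

Lemma exists_idx3_max (l : list (bas * bas * bas)) : l <> [] ->
  exists t, In t l /\ forall u, In u l -> idx3 u <= idx3 t.
Proof.
  induction l as [|a l IH]; intros H; [congruence|].
  destruct l as [|b l'].
  - exists a; split; [now left|]; intros u [<-|[]]; lra.
  - destruct IH as [t [Ht Hmax]]; [discriminate|].
    destruct (Rle_dec (idx3 a) (idx3 t)).
    + exists t; split; [now right|]; intros u [<-|Hu]; auto.
    + exists a; split; [now left|]; intros u [<-|Hu]; [lra|].
      specialize (Hmax u Hu); lra.
Qed.

Lemma exists_generic_positive Gam i : nontrivial_subgroup Gam ->
  exists p, Gam p /\ 0 < p /\ p <> i /\ p <> 2 * i.
Proof.
  intros [[_ [Hadd Hopp]] [g [Hg Hg0]]].
  assert (Hq : exists q, Gam q /\ 0 < q).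
  { destruct (Rlt_dec 0 g); [exists g | exists (- g)]; split; auto; lra. }
  destruct Hq as [q [Hq Hq0]].
  destruct (Req_EM_T q i), (Req_EM_T q (2 * i));
    try (exists (q + q + q); repeat split; auto; lra).
  now exists q.
Qed.

Theorem annihilated_zero3 Gam s v : nontrivial_subgroup Gam ->
  (forall x, valid1 Gam s x -> is_zero3 (act3 x v)) -> is_zero3 v.
Proof.
  intros HGam Hann.
  set (S := filter (fun u => if Cx_eq_dec (coef3 v u) C0 then false else true) (keys3 v)).
  assert (HS : forall u, In u S <-> In u (keys3 v) /\ coef3 v u <> C0).
  { intros u; unfold S; rewrite filter_In; destruct Cx_eq_dec; intuition congruence. }
  destruct S as [|t0 l] eqn:ES.
  { intros T; destruct (In_dec tri_eq_dec T (keys3 v)) as [HT|HT].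
    - destruct (Cx_eq_dec (coef3 v T) C0) as [|Hnz]; [auto|].
      destruct (proj2 (HS T) (conj HT Hnz)).
    - apply coef3_notin; intro; apply HT, nodup_In; auto. }
  rewrite <- ES in HS.
  destruct (exists_idx3_max S) as [[[a b] c] [Habc Hmax]]; [congruence|].
  apply HS in Habc as [Habc Hnz]; exfalso.
  destruct (exists_generic_positive Gam (idx a) HGam) as [p [Hp [Hp0 [Hpa Hp2a]]]].
  assert (HLp : valid1 Gam s [(C1, bL p)]) by (constructor; [exact Hp | constructor]).
  pose proof (Hann _ HLp (shift p a, b, c)) as E.
  rewrite coef3_act3_L_top in E; auto.
  - apply Cmul_RtoC_eq0 in E; auto using weight_neq0.
  - intros d Hd Hd0; apply (Hmax d), HS; auto.
Qed.

Theorem mainTheorem5 (Gam : R -> Prop) (s : R)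
  (HGam : nontrivial_subgroup Gam) (Hs : Gam (2 * s))
  (t : vec2) (Ht : valid2 Gam s t) :
  let r := one_minus_tau t in
  is_zero3 (cYB r) <->
  (forall x : vec1, valid1 Gam s x -> is_zero3 (act3 x (cYB r))).
Proof.
  intros r; split.
  - intros Hz x _; exact (act3_zero3 x _ Hz).
  - exact (annihilated_zero3 Gam s _ HGam).
Qed.
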